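(* A map $M=(C_M,v_M,f_M)$ is orientable if and only if the $a$-map $M^a=(a_M\circ v_M,v_M,f_M)$ is orientable.
   Context: A map is a triple $M=(C_M,v_M,f_M)$ where $C_M$ is a finite cubic graph and $v_M,f_M$ are disjoint perfect matchings whose union is a disjoint union of 4-cycles; $a_M$ is the third perfect matching; each matching is viewed as a fixed-point-free involution on $V(C_M)$. $M$ is orientable if $C_M$ is bipartite. An $a$-map $A=(R,\Theta,\Phi)$ on a finite set $B$ is a triple of permutations with $\Theta\Phi=\Phi\Theta$, $\Theta^2=\Phi^2=\mathrm{id}$, $x,\Theta x,\Phi x,\Theta\Phi x$ distinct for all $x$, $R\Theta=\Theta R^{-1}$, and $R^n(x)\ne\Theta x$ for all integers $n$ and all $x$. $A$ is non-orientable if for some orbit of the group $\langle R,\Theta,\Phi\rangle$ the group $\langle R,\Theta\Phi\rangle$ acts transitively on that orbit; otherwise $A$ is orientable. *)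

From mathcomp Require Import all_boot all_fingroup.
Set Implicit Arguments. Unset Strict Implicit. Unset Printing Implicit Defensive.
Local Open Scope group_scope.

(* A map on the finite vertex set T of its cubic graph C_M, given by the
   three perfect matchings v_M, f_M, a_M viewed as fixed-point-free
   involutions.  The edges of C_M are exactly {x, v x}, {x, f x}, {x, a x};
   the three matchings are pairwise disjoint (so C_M is cubic), and the
   union of v and f is a disjoint union of 4-cycles
   x, v x, f (v x), v (f (v x)), back to x. *)
Definition fpf_involution (T : finType) (s : {perm T}) : Prop :=
  forall x, s (s x) = x /\ s x != x.

Definition is_map (T : finType) (v f a : {perm T}) : Prop :=
  [/\ fpf_involution v, fpf_involution f, fpf_involution a,
      (forall x, [/\ v x != f x, v x != a x & f x != a x]) &
      (forall x, f (v (f (v x))) = x /\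
                 uniq [:: x; v x; f (v x); v (f (v x))])].

(* M is orientable iff C_M is bipartite: there is a proper 2-colouring. *)
Definition map_orientable (T : finType) (v f a : {perm T}) : Prop :=
  exists c : T -> bool,
    forall x, [/\ c (v x) != c x, c (f x) != c x & c (a x) != c x].

(* Note: in MathComp, (s * t) x = t (s x),
   so the composite Theta o Phi is (Phi * Theta). *)
Definition amap_nonorientable (T : finType) (R Th Ph : {perm T}) : Prop :=
  exists x : T,
    [transitive <<[set R; Ph * Th]>>,
       on orbit 'P <<[set R; Th; Ph]>> x | 'P].

Definition amap_orientable (T : finType) (R Th Ph : {perm T}) : Prop :=
  ~ amap_nonorientable R Th Ph.

From mathcomp Require Import all_boot all_fingroup.
Local Open Scope group_scope.

(* Let H = <R, Theta Phi> = <a v, v f>.  Conjugation by the involution v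
   inverts both generators of H, so v normalises H and <R, Theta, Phi> is
   H u vH; each of its orbits is the union of the H-orbits of y and of v y.
   The a-map is orientable iff these two H-orbits are always distinct, which
   is exactly when some 2-colouring is constant on H-orbits and swapped by v.
   As a v and v f are products of two matchings, such colourings are the
   proper 2-colourings of C_M, i.e. witnesses of bipartiteness. *)

Lemma fpf_involutionV {T : finType} (s : {perm T}) :
  fpf_involution s -> s^-1 = s.
Proof. by move=> sK; apply/permP => x; rewrite -{1}(proj1 (sK x)) permK. Qed.

Lemma gen_invariant (T : finType) (rT : eqType) (A : {set {perm T}})
    (c : T -> rT) :
  {in A, forall (g : {perm T}) z, c (g z) = c z} ->
  {in <<A>>, forall (g : {perm T}) z, c (g z) = c z}.
Proof.
move=> cA; pose S := [set g : {perm T} | [forall z, c (g z) == c z]].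
have gS : group_set S.
  apply/group_setP; split=> [|g h]; rewrite !inE.
    by apply/forallP => z; rewrite perm1.
  move=> /forallP cg /forallP ch; apply/forallP => z.
  by rewrite permM (eqP (ch _)) (eqP (cg _)).
have /subsetP sAS : <<A>> \subset Group gS.
  rewrite gen_subG; apply/subsetP => g /cA cg.
  by rewrite inE; apply/forallP => z; rewrite cg.
by move=> g /sAS; rewrite inE => /forallP cg z; apply/eqP.
Qed.

Lemma norm_gen_inverted (gT : finGroupType) (A : {set gT}) (v : gT) :
  {in A, forall x, x ^ v = x^-1} -> v \in 'N(<<A>>).
Proof.
move=> Ainv; rewrite inE -genJ gen_subG; apply/subsetP => _ /imsetP[x Ax ->].
by rewrite Ainv // groupV mem_gen.
Qed.

Lemma cycle_involution (gT : finGroupType) (v : gT) :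
  v * v = 1 -> <[v]> = [set 1; v].
Proof.
move=> vK; apply/setP => w; apply/cycleP/set2P => [[k ->] | [] ->].
- rewrite -(expg_mod k (vK : v ^+ 2 = 1)) modn2.
  by case: (odd k); [right | left].
- by exists 0%N.
- by exists 1%N.
Qed.

Section HalfOrbits.

Context {T : finType} {H : {group {perm T}}} {v : {perm T}}.
Hypotheses (vK : v * v = 1) (nHv : v \in 'N(H)).

Lemma orbit_join_cycle y :
  orbit 'P (<[v]> <*> H) y = orbit 'P H y :|: orbit 'P H (v y).
Proof.
rewrite norm_joinEl ?cycle_subG //= cycle_involution // mulUg.
by rewrite orbitE imsetU -!orbitE !orbit_lcoset /= !apermE perm1.
Qed.

Lemma atrans_orbit_join y :
  [transitive H, on orbit 'P (<[v]> <*> H) y | 'P] <-> v y \in orbit 'P H y.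
Proof.
rewrite orbit_join_cycle; split => [/atransP trH | /orbit_eqP ->].
  by rewrite (trH y) in_setU orbit_refl ?orbT.
by rewrite setUid; apply: atrans_orbit.
Qed.

Lemma swap_colouring_orbits :
  (exists c : T -> bool,
     {in H, forall (h : {perm T}) z, c (h z) = c z} /\
     forall z, c (v z) != c z) <->
  (forall y, v y \notin orbit 'P H y).
Proof.
split=> [[c [cH cv]] y | vH].
  by apply/negP => /orbitP[h Hh /= hy]; move: (cv y); rewrite -hy cH ?eqxx.
pose G := <[v]> <*> H.
pose r y := odflt y [pick z in orbit 'P G y].
have rG y : r y \in orbit 'P G y.
  by rewrite /r; case: pickP => //= _; apply: orbit_refl.
have rE y z : z \in orbit 'P G y -> r z = r y.
  move=> /orbit_eqP eqGzy; rewrite /r eqGzy; case: pickP => //= noGy.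
  by have := noGy y; rewrite orbit_refl.
exists (fun z => r z \in orbit 'P H z); split=> [h Hh z | z] /=.
  have Gh : h \in G by rewrite (subsetP (joing_subr _ _)).
  rewrite (rE z (h z)); last exact: (mem_orbit 'P z Gh).
  by rewrite -[h z]/('P%act z h) orbit_act.
have Gv : v \in G by rewrite (subsetP (joing_subl _ _)) ?cycle_id.
rewrite (rE z (v z)); last exact: (mem_orbit 'P z Gv).
have := rG z; rewrite orbit_join_cycle => /setUP[] rz.
- by rewrite !(orbit_transl _ rz) orbit_refl orbit_sym (negPf (vH z)).
- by rewrite !(orbit_transl _ rz) orbit_refl (negPf (vH z)).
Qed.

End HalfOrbits.

Lemma gen_join_cycle (T : finType) (r v f : {perm T}) :
  <<[set r; v; f]>> = <[v]> <*> <<[set r; f * v]>>.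
Proof.
set H := <<[set r; f * v]>>.
have /subsetP HJ : H \subset <[v]> <*> H := joing_subr _ _.
have vJ : v \in <[v]> <*> H := subsetP (joing_subl _ _) v (cycle_id v).
have fvH : f * v \in H by rewrite mem_gen ?inE ?eqxx ?orbT.
apply/eqP; rewrite eqEsubset; apply/andP; split.
  rewrite gen_subG; apply/subsetP => g; rewrite !inE -orbA => /or3P[] /eqP ->.
  - by apply: HJ; rewrite mem_gen ?inE ?eqxx.
  - exact: vJ.
  - by rewrite -(mulgK v f) groupM ?(HJ _ fvH) // groupV.
rewrite join_subG cycle_subG gen_subG mem_gen ?inE ?eqxx ?orbT //=.
apply/subsetP => _ /set2P[] ->; first by rewrite mem_gen ?inE ?eqxx.
by rewrite groupM ?mem_gen ?inE ?eqxx ?orbT.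
Qed.

Lemma map_orientableE {T : finType} (v f a : {perm T}) :
  map_orientable v f a <->
  exists c : T -> bool,
    {in <<[set v * a; f * v]>>, forall (h : {perm T}) z, c (h z) = c z} /\
    forall z, c (v z) != c z.
Proof.
split=> [[c cP] | [c [cH cv]]].
  have flip (b b' : bool) : b != b' -> b = ~~ b' by case: b; case: b'.
  have cv z : c (v z) = ~~ c z by apply: flip; case: (cP z).
  have cf z : c (f z) = ~~ c z by apply: flip; case: (cP z).
  have ca z : c (a z) = ~~ c z by apply: flip; case: (cP z).
  exists c; split=> [|z]; last by rewrite cv; case: (c z).
  by apply: gen_invariant => _ /set2P[] -> z; rewrite permM ?ca cv ?cf negbK.
have cvV u : c (v^-1 u) != c u by have := cv (v^-1 u); rewrite permKV eq_sym.
exists c => z; split=> //.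
  have := cvV ((f * v) z).
  by rewrite (cH (f * v)) ?mem_gen ?inE ?eqxx ?orbT // permM permK.
have := cvV z.
by rewrite -(cH (v * a) _ (v^-1 z)) ?mem_gen ?inE ?eqxx // permM permKV.
Qed.

Theorem proposition1p2 (T : finType) (v f a : {perm T}) :
  is_map v f a ->
  (map_orientable v f a <-> amap_orientable (v * a) v f).
Proof.
case=> /fpf_involutionV vV /fpf_involutionV fV /fpf_involutionV aV _ _.
have vK : v * v = 1 by rewrite -{1}vV mulVg.
set H := <<[set v * a; f * v]>>.
have nHv : v \in 'N(H).
  apply: norm_gen_inverted => _ /set2P[] ->; rewrite conjgE invMg vV ?aV ?fV.
    by rewrite !mulgA vK mul1g.
  by rewrite -(mulgA f) vK mulg1.
rewrite /amap_orientable /amap_nonorientable gen_join_cycle -/H.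
apply: (iff_trans (map_orientableE v f a)).
apply: (iff_trans (swap_colouring_orbits vK nHv)).
split=> [noH [y /(atrans_orbit_join vK nHv)] | noT y]; first exact/negP/noH.
by apply/negP => vyH; apply: noT; exists y; apply/(atrans_orbit_join vK nHv).
Qed.
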